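(* Let $n>1$ be an integer. (1) If $n$ is $2$-$T_0T^\ast$-perfect then $n=p_1^3$ for some prime $p_1$; (2) if $n$ is $3$-$T_0T^\ast$-perfect then $n=p_1^5$; (3) if $n$ is $4$-$T_0T^\ast$-perfect then $n=p_1^7$; (4) if $n$ is $5$-$T_0T^\ast$-perfect then $n=p_1^9$; (5) if $n$ is $6$-$T_0T^\ast$-perfect then $n=p_1^{11}$; (6) if $n$ is $7$-$T_0T^\ast$-perfect then $n=p_1^{13}$; (7) if $n$ is $8$-$T_0T^\ast$-perfect then $n=p_1^{15}$; (8) if $n$ is $9$-$T_0T^\ast$-perfect then $n=p_1^{17}$ or $n=p_1p_2$ for distinct primes $p_1,p_2$; (9) if $n$ is $10$-$T_0T^\ast$-perfect then $n=p_1^{19}$; where in each case $p_1$ is a prime.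
   Context: For a positive integer $m$, $T(m)$ denotes the product of all positive divisors of $m$, and $T^\ast(m)$ the product of all unitary divisors of $m$ (divisors $d$ with $\gcd(d,m/d)=1$). For an integer $k\ge 2$, an integer $n>1$ is called $k$-$T_0T^\ast$-perfect if $T(T^\ast(n))=n^k$. *)

From mathcomp Require Import all_boot.
Set Implicit Arguments. Unset Strict Implicit. Unset Printing Implicit Defensive.

Definition T (m : nat) : nat := \prod_(d <- divisors m) d.

Definition Tstar (m : nat) : nat :=
  \prod_(d <- divisors m | coprime d (m %/ d)) d.

Definition kT0Tstar_perfect (k n : nat) : Prop :=
  1 < n /\ T (Tstar n) = n ^ k.

From mathcomp Require Import all_boot zify.
Set Implicit Arguments. Unset Strict Implicit. Unset Printing Implicit Defensive.

(* Pairing each divisor d of m with m/d gives T(m)^2 = m^tau(m), and likewise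
   T*(n)^2 = n^tau*(n) for the unitary divisors, so T(T*(n)) = n^k amounts to
   4k = tau*(n) tau(T*(n)).  For n = p^a one has T*(n) = n and tau*(n) = 2,
   whence a + 1 = 2k.  If n has two prime factors p, q then tau*(n) >= 4, so
   p^2 q^2 divides T*(n) and tau(T*(n)) >= 9; k <= 10 then forces tau*(n) = 4,
   T*(n) = n^2, and as tau(n^2) is odd, k = tau(n^2) = 9, which in turn forces
   n^2 = p^2 q^2. *)

Lemma cofactorK m d : 0 < m -> d %| m -> m %/ (m %/ d) = d.
Proof. by move=> m_gt0 dvd_dm; rewrite divnA // mulnC mulnK. Qed.

Lemma perm_divisors_cofactor m : 0 < m ->
  perm_eq (divisors m) [seq m %/ d | d <- divisors m].
Proof.
move=> m_gt0; apply: uniq_perm; first exact: divisors_uniq.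
  rewrite map_inj_in_uniq ?divisors_uniq // => x y.
  rewrite -!dvdn_divisors // => xm ym Exy.
  by rewrite -(cofactorK m_gt0 xm) Exy cofactorK.
move=> d; rewrite -dvdn_divisors //; apply/idP/mapP => [dm | [e]].
  by exists (m %/ d); rewrite ?cofactorK // -dvdn_divisors // dvdn_div.
by rewrite -dvdn_divisors // => em ->; apply: dvdn_div.
Qed.

Lemma prod_divisors_sq m (P : pred nat) : 0 < m ->
  (forall d, d %| m -> P (m %/ d) = P d) ->
  (\prod_(d <- divisors m | P d) d) ^ 2 = m ^ count P (divisors m).
Proof.
move=> m_gt0 P_cofactor.
have prod_cofactor : \prod_(d <- divisors m | P d) d
                   = \prod_(d <- divisors m | P d) (m %/ d).
  rewrite (perm_big _ (perm_divisors_cofactor m_gt0)) big_map.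
  rewrite big_seq_cond [RHS]big_seq_cond; apply: eq_bigl => d.
  by case: (boolP (d \in _)) => //=; rewrite -dvdn_divisors // => /P_cofactor ->.
rewrite expnS expn1 {2}prod_cofactor -big_split /= big_seq_cond.
rewrite (eq_bigr (fun=> m)) => [|d /andP[]]; last first.
  by rewrite -dvdn_divisors // => dm _; rewrite mulnC divnK.
by rewrite -big_seq_cond big_const_seq iter_muln_1.
Qed.

Lemma odd_size_divisors_sq m : 0 < m -> odd (size (divisors (m ^ 2))).
Proof.
move=> m_gt0; set s := divisors (m ^ 2).
have m2_gt0 : 0 < m ^ 2 by rewrite expn_gt0 m_gt0.
have count_m : count (pred1 m) s = 1.
  by rewrite count_uniq_mem ?divisors_uniq // -dvdn_divisors // dvdn_mulr.
have count_gt_lt : count (fun d => m < d) s = count (fun d => d < m) s.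
  rewrite (permP (perm_divisors_cofactor m2_gt0)) count_map.
  apply: eq_in_count => d; rewrite -dvdn_divisors // => dvd_dm2.
  have d_gt0 : 0 < d by apply: dvdn_gt0 dvd_dm2.
  move/divnK: dvd_dm2; rewrite /preim /=; move: (m ^ 2 %/ d) => e de.
  by apply/idP/idP; nia.
have count_ge : count (predC (fun d => d < m)) s
               = count (pred1 m) s + count (fun d => m < d) s.
  rewrite -count_predUI (eq_count (a1 := predI _ _) (a2 := pred0)).
    by rewrite count_pred0 addn0; apply: eq_count => d /=; rewrite -leqNgt leq_eqVlt eq_sym.
  by move=> d /=; case: eqP => // ->; rewrite ltnn.
rewrite -(count_predC (fun d => d < m)) count_ge count_m count_gt_lt.
by rewrite addnCA addnn oddD odd_double.
Qed.

Definition unitary n : pred nat := fun d => coprime d (n %/ d).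

Definition tau_star n := count (unitary n) (divisors n).

Lemma T_sq m : 0 < m -> T m ^ 2 = m ^ size (divisors m).
Proof. by move=> m_gt0; rewrite -count_predT; apply: prod_divisors_sq. Qed.

Lemma Tstar_sq n : 0 < n -> Tstar n ^ 2 = n ^ tau_star n.
Proof.
move=> n_gt0; apply: prod_divisors_sq => // d dvd_dn.
by rewrite /unitary cofactorK // coprime_sym.
Qed.

Lemma Tstar_gt0 n : 0 < n -> 0 < Tstar n.
Proof.
move=> n_gt0; have : 0 < n ^ tau_star n by rewrite expn_gt0 n_gt0.
by rewrite -Tstar_sq // expn_gt0 orbF.
Qed.

Lemma divisors_pfactor p a : prime p ->
  perm_eq (divisors (p ^ a)) [seq p ^ i | i <- iota 0 a.+1].
Proof.
move=> p_pr; have pa_gt0 : 0 < p ^ a by rewrite expn_gt0 prime_gt0.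
apply: uniq_perm; first exact: divisors_uniq.
  by rewrite map_inj_uniq ?iota_uniq //; apply/expnI/prime_gt1.
move=> d; rewrite -dvdn_divisors //; apply/(dvdn_pfactor _ _ p_pr)/mapP.
  by case=> i le_ia ->; exists i; rewrite // mem_iota.
by case=> i; rewrite mem_iota => le_ia ->; exists i.
Qed.

Lemma size_divisors_pfactor p a : prime p -> size (divisors (p ^ a)) = a.+1.
Proof. by move/divisors_pfactor/perm_size ->; rewrite size_map size_iota. Qed.

Lemma unitary_pfactor p a i : prime p -> i <= a ->
  unitary (p ^ a) (p ^ i) = (i == 0) || (i == a).
Proof.
move=> p_pr le_ia; rewrite /unitary -expnB ?prime_gt0 //.
case: i le_ia => [|i] le_ia; first by rewrite coprime1n.
rewrite coprime_pexpl //=; case: eqVneq => [->|ne_ia]; first by rewrite subnn coprimen1.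
rewrite coprime_pexpr; last by rewrite subn_gt0 ltn_neqAle ne_ia.
by rewrite prime_coprime // dvdnn.
Qed.

Lemma tau_star_pfactor p a : prime p -> 0 < a -> tau_star (p ^ a) = 2.
Proof.
move=> p_pr a_gt0; rewrite /tau_star (permP (divisors_pfactor a p_pr)) count_map.
rewrite (eq_in_count (a2 := predU (pred1 0) (pred1 a))) => [|i]; last first.
  by rewrite mem_iota /preim /= => le_ia; rewrite unitary_pfactor.
have := count_predUI (pred1 0) (pred1 a) (iota 0 a.+1).
rewrite (eq_count (a1 := predI _ _) (a2 := pred0)) => [|i /=]; last first.
  by apply/andP => -[/eqP -> /eqP a0]; rewrite -a0 in a_gt0.
by rewrite count_pred0 addn0 => ->; rewrite !count_uniq_mem ?iota_uniq // !mem_iota /= add0n ltnSn.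
Qed.

Lemma tau_star_ge4_coprime x y : 1 < x -> 1 < y -> coprime x y ->
  4 <= tau_star (x * y).
Proof.
move=> x_gt1 y_gt1 co_xy.
have [x_gt0 y_gt0] : 0 < x /\ 0 < y by split; apply: ltnW.
have xy_gt0 : 0 < x * y by rewrite muln_gt0 x_gt0.
have unitary4 : {subset [:: 1; x * y; x; y] <= filter (unitary (x * y)) (divisors (x * y))}.
  move=> d; rewrite mem_filter -dvdn_divisors // /unitary !inE.
  case/or4P => /eqP ->.
  - by rewrite divn1 coprime1n dvd1n.
  - by rewrite divnn xy_gt0 coprimen1 dvdnn.
  - by rewrite mulKn // co_xy dvdn_mulr.
  - by rewrite mulnK // coprime_sym co_xy dvdn_mull.
rewrite /tau_star -size_filter; apply: uniq_leq_size unitary4.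
have ne_xy : x != y by apply: contraTneq co_xy => ->; rewrite /coprime gcdnn neq_ltn y_gt1 orbT.
rewrite /= !inE !negb_or ne_xy !neq_ltn x_gt1 y_gt1 ?orbT //=.
have [lt_x_xy lt_y_xy] : x < x * y /\ y < x * y by split; nia.
by rewrite lt_x_xy lt_y_xy (ltn_trans x_gt1 lt_x_xy) !orbT.
Qed.

Lemma tau_star_ge4 n p q : 0 < n -> prime p -> prime q -> p != q ->
  p %| n -> q %| n -> 4 <= tau_star n.
Proof.
move=> n_gt0 p_pr q_pr ne_pq dvd_pn dvd_qn.
rewrite -(partnC p n_gt0); apply: tau_star_ge4_coprime (coprime_partC _ _ _).
  by rewrite p_part_gt1 mem_primes p_pr n_gt0.
have : q \in \pi(n`_p^') by rewrite pi_of_part // !inE mem_primes q_pr n_gt0 dvd_qn eq_sym.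
rewrite mem_primes => /and3P[_ part_gt0 dvd_q_part].
exact: leq_trans (prime_gt1 q_pr) (dvdn_leq part_gt0 dvd_q_part).
Qed.

Lemma logn_pexpM p q i j : prime p -> prime q -> p != q ->
  logn p (p ^ i * q ^ j) = i.
Proof.
move=> p_pr q_pr ne_pq; rewrite lognM ?expn_gt0 ?prime_gt0 // !lognX.
by rewrite !logn_prime // eqxx (negbTE ne_pq) muln0 addn0 muln1.
Qed.

Section TwoPrimeSquares.

Variables p q : nat.
Hypotheses (p_pr : prime p) (q_pr : prime q) (ne_pq : p != q).

Let divs_p2q2 := [seq p ^ i * q ^ j | i <- iota 0 3, j <- iota 0 3].

Let uniq_divs_p2q2 : uniq divs_p2q2.
Proof.
apply: allpairs_uniq => // -[i1 j1] [i2 j2] _ _ /= eq12.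
have := logn_pexpM i1 j1 p_pr q_pr ne_pq; rewrite eq12 logn_pexpM // => ->.
have ne_qp : q != p by rewrite eq_sym.
have := logn_pexpM j1 i1 q_pr p_pr ne_qp.
by rewrite mulnC eq12 mulnC logn_pexpM // => ->.
Qed.

Let divs_p2q2_dvd d : d \in divs_p2q2 -> d %| p ^ 2 * q ^ 2.
Proof.
case/allpairsP => -[i j] /= [i_lt3 j_lt3 ->].
by apply: dvdn_mul; apply: dvdn_exp2l; [move: i_lt3 | move: j_lt3];
  rewrite !inE => /or3P[] /eqP ->.
Qed.

Lemma size_divisors_ge9 m : 0 < m -> p ^ 2 * q ^ 2 %| m ->
  9 <= size (divisors m).
Proof.
move=> m_gt0 dvd_m; rewrite -[9]/(size divs_p2q2); apply: uniq_leq_size => //.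
by move=> d /divs_p2q2_dvd dvd_d; rewrite -dvdn_divisors // (dvdn_trans dvd_d).
Qed.

Lemma size_divisors_le9 m : 0 < m -> p ^ 2 * q ^ 2 %| m ->
  size (divisors m) <= 9 -> m = p ^ 2 * q ^ 2.
Proof.
move=> m_gt0 dvd_m le9; case: (boolP (m \in divs_p2q2)) => [/divs_p2q2_dvd dvd_m' | m_new].
  by apply/eqP; rewrite eqn_dvd dvd_m dvd_m'.
suff : size (m :: divs_p2q2) <= size (divisors m) by rewrite /= ltnNge le9.
apply: uniq_leq_size; first by rewrite /= m_new; apply: uniq_divs_p2q2.
move=> d; rewrite inE -dvdn_divisors // => /predU1P[-> // | /divs_p2q2_dvd dvd_d].
exact: dvdn_trans dvd_d dvd_m.
Qed.

End TwoPrimeSquares.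

Lemma T_Tstar_exponent n k : 1 < n -> T (Tstar n) = n ^ k ->
  k * 4 = tau_star n * size (divisors (Tstar n)).
Proof.
move=> n_gt1 perfect; have n_gt0 := ltnW n_gt1.
apply: (expnI n_gt1); rewrite expnM -perfect -[4]/(2 * 2) expnM.
by rewrite T_sq ?Tstar_gt0 // -expnM mulnC expnM Tstar_sq // -expnM.
Qed.

Lemma perfect_pfactor p a k : prime p -> 0 < a ->
  T (Tstar (p ^ a)) = (p ^ a) ^ k -> a.+1 = k * 2.
Proof.
move=> p_pr a_gt0; set n := p ^ a => perfect.
have n_gt1 : 1 < n by rewrite -(expn0 p) ltn_exp2l ?prime_gt1.
have n_gt0 := ltnW n_gt1.
have Tstar_n : Tstar n = n by apply: (expIn (e := 2)); rewrite // Tstar_sq // tau_star_pfactor.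
have := T_Tstar_exponent n_gt1 perfect.
by rewrite tau_star_pfactor // Tstar_n size_divisors_pfactor //; lia.
Qed.

Lemma sq_dvd_Tstar n r : 0 < n -> 4 <= tau_star n -> prime r -> r %| n ->
  r ^ 2 %| Tstar n.
Proof.
move=> n_gt0 tau_ge4 r_pr dvd_rn; rewrite pfactor_dvdn ?Tstar_gt0 //.
have := congr1 (logn r) (Tstar_sq n_gt0); rewrite !lognX.
have : 0 < logn r n by rewrite logn_gt0 mem_primes r_pr n_gt0 dvd_rn.
lia.
Qed.

Lemma perfect_two_primes n k p q : 0 < n -> prime p -> prime q -> p != q ->
  p %| n -> q %| n -> T (Tstar n) = n ^ k -> k <= 10 -> k = 9 /\ n = p * q.
Proof.
move=> n_gt0 p_pr q_pr ne_pq dvd_pn dvd_qn perfect k_le10.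
have n_gt1 : 1 < n := leq_trans (prime_gt1 p_pr) (dvdn_leq n_gt0 dvd_pn).
have tau_ge4 := tau_star_ge4 n_gt0 p_pr q_pr ne_pq dvd_pn dvd_qn.
have Tstar_n_gt0 := Tstar_gt0 n_gt0.
have dvd_p2q2 : p ^ 2 * q ^ 2 %| Tstar n.
  by rewrite Gauss_dvd ?sq_dvd_Tstar // coprimeXl // coprimeXr // prime_coprime // dvdn_prime2.
have size_ge9 := size_divisors_ge9 p_pr q_pr ne_pq Tstar_n_gt0 dvd_p2q2.
have k_eq := T_Tstar_exponent n_gt1 perfect.
have [tau4 size_eq_k] : tau_star n = 4 /\ size (divisors (Tstar n)) = k.
  move: (tau_star n) (size (divisors (Tstar n))) k_eq tau_ge4 size_ge9 k_le10.
  by clear; nia.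
have Tstar_n : Tstar n = n ^ 2 by apply: (expIn (e := 2)); rewrite // Tstar_sq // tau4 -expnM.
have k9 : k = 9.
  have k_odd : odd k by rewrite -size_eq_k Tstar_n odd_size_divisors_sq.
  case: (k =P 10) k_odd => [-> // | ne_k10 _].
  by move: size_ge9 k_le10 ne_k10; rewrite size_eq_k; clear; lia.
split => //; apply: (expIn (e := 2)); rewrite // expnMn -Tstar_n.
by apply: (size_divisors_le9 p_pr q_pr ne_pq Tstar_n_gt0 dvd_p2q2); rewrite size_eq_k k9.
Qed.

Lemma perfect_cases k n : kT0Tstar_perfect k n -> k <= 10 ->
  (exists p a, [/\ prime p, n = p ^ a & a.+1 = k * 2]) \/
  (k = 9 /\ exists p q, [/\ prime p, prime q, p != q & n = p * q]).
Proof.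
move=> [n_gt1 perfect] k_le10; have n_gt0 := ltnW n_gt1.
have p_pr := pdiv_prime n_gt1; have dvd_pn := pdiv_dvd n; set p := pdiv n in p_pr dvd_pn *.
case: (boolP (p.-nat n)) => [/p_natP[a n_eq] | ].
  left; exists p, a; split => //.
  have a_gt0 : 0 < a by case: a n_eq n_gt1 => [->|].
  by move: perfect; rewrite n_eq; apply: perfect_pfactor.
rewrite /pnat n_gt0 => /allPn[q].
rewrite mem_primes !inE => /and3P[q_pr _ dvd_qn] ne_qp; right.
have [k9 n_eq] := perfect_two_primes n_gt0 q_pr p_pr ne_qp dvd_qn dvd_pn perfect k_le10.
by split => //; exists q, p.
Qed.

Lemma perfect_prime_power k n : k != 9 -> k <= 10 -> kT0Tstar_perfect k n ->
  exists p, prime p /\ n = p ^ (k * 2).-1.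
Proof.
move=> ne_k9 k_le10 /perfect_cases/(_ k_le10)[[p [a [p_pr -> <-]]] | [k9 _]].
  by exists p.
by rewrite k9 in ne_k9.
Qed.

Theorem mainTheorem6 (n : nat) : 1 < n ->
  (kT0Tstar_perfect 2 n -> exists p, prime p /\ n = p ^ 3) /\
  (kT0Tstar_perfect 3 n -> exists p, prime p /\ n = p ^ 5) /\
  (kT0Tstar_perfect 4 n -> exists p, prime p /\ n = p ^ 7) /\
  (kT0Tstar_perfect 5 n -> exists p, prime p /\ n = p ^ 9) /\
  (kT0Tstar_perfect 6 n -> exists p, prime p /\ n = p ^ 11) /\
  (kT0Tstar_perfect 7 n -> exists p, prime p /\ n = p ^ 13) /\
  (kT0Tstar_perfect 8 n -> exists p, prime p /\ n = p ^ 15) /\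
  (kT0Tstar_perfect 9 n ->
     (exists p, prime p /\ n = p ^ 17) \/
     (exists p1 p2, [/\ prime p1, prime p2, p1 != p2 & n = p1 * p2])) /\
  (kT0Tstar_perfect 10 n -> exists p, prime p /\ n = p ^ 19).
Proof.
move=> _; do 7 (split; first exact: perfect_prime_power).
split; last exact: perfect_prime_power.
move/perfect_cases => /(_ isT) [[p [a [p_pr -> a_eq]]] | [_ two_primes]].
  by left; exists p; case: a_eq => ->.
by right.
Qed.
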